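(* Let $\pi\colon\mathsf{States}\to\mathbb{R}_{\ge0}$ be a potential function and let $C$ be a program. Then: (1) (mut) $\mathsf{aert}_\pi[\![\langle e\rangle:=e']\!]([e\mapsto e']-\pi)\preceq[e\mapsto-]-\pi$; (2) (lkp) $\mathsf{aert}_\pi[\![x:=\langle e\rangle]\!]\big(([x=z\wedge\mathsf{emp}]\oplus[e[x/y]\mapsto z])-\pi\big)\preceq([x=y\wedge\mathsf{emp}]\oplus[e\mapsto z])-\pi$; (3) (alc) if $x$ does not occur in $e$, then $\mathsf{aert}_\pi[\![x:=\mathtt{alloc}(e)]\!]\big(\bigoplus_{i=1}^{e}[x+i-1\mapsto 0]-\pi\big)\preceq[\mathsf{emp}]-\pi$; (4) (aux) for all $f,g\in\mathbb{T}$ and every variable $y$ not occurring in $C$: $\mathsf{aert}_\pi[\![C]\!](f-\pi)\preceq g-\pi$ implies $\mathsf{aert}_\pi[\![C]\!](-\pi+\inf y\colon f)\preceq-\pi+\inf y\colon g$.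
   Context: States and programs. Fix a finite set $\mathrm{Vars}$ of variables; values are $\mathbb{N}$, locations are $\mathbb{N}_{>0}$. A stack is $s\colon \mathrm{Vars}\to\mathbb{N}$; a heap is a partial map $h$ from a finite set $\mathrm{dom}(h)\subseteq\mathbb{N}_{>0}$ to $\mathbb{N}$. $h_1\perp h_2$ means disjoint domains; then $h_1\star h_2$ is their union; $h_\emptyset$ is the empty heap. $\mathsf{States}$ is the set of pairs $(s,h)$. $s(e)$ is the value of a (heap-independent) arithmetic expression $e$ under $s$, $s\models\varphi$ means the Boolean expression $\varphi$ holds under $s$, $s[x\mapsto v]$ is the updated stack; $e[x/y]$ is syntactic substitution of variable $y$ for $x$ in $e$. Programs are generated by $C ::= \mathtt{tick}(e) \mid x:=e \mid x:=\mathtt{alloc}(e) \mid \langle e\rangle:=e' \mid x:=\langle e\rangle \mid \mathtt{free}(e) \mid \{C\}[p]\{C\} \mid \mathtt{if}(\varphi)\{C\}\mathtt{else}\{C\} \mid C;C \mid \mathtt{while}(\varphi)\{C\}$, where $p$ is an expression with $s(p)\in[0,1]\cap\mathbb{Q}$ for all $s$. The statements other than tick, probabilistic choice, conditional, sequencing and loops are called atomic. Runtimes. $\mathbb{T}$ is the set of functions $\mathsf{States}\to[0,\infty]$, ordered pointwise by $\preceq$; arithmetic is pointwise with $0\cdot\infty=0$. $[\varphi]$ is the $0/1$-valued Iverson bracket. Truncated subtraction: $a\dot- b=\max(a-b,0)$, $\infty\dot- b=\infty$ for finite $b$, $a\dot-\infty=0$. $(f\oplus g)(s,h)=\min\{f(s,h_1)+g(s,h_2)\mid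 h=h_1\star h_2\}$; $(f \mathbin{-\!\!\ominus} g)(s,h)=\sup\{g(s,h\star h')\dot- f(s,h')\mid h'\perp h\}$; $(\inf y\colon f)(s,h)=\inf_{v\in\mathbb{N}} f(s[y\mapsto v],h)$, $(\sup y\colon f)(s,h)=\sup_{v\in\mathbb{N}}f(s[y\mapsto v],h)$; $f[x/e](s,h)=f(s[x\mapsto s(e)],h)$. Atomic ($0/\infty$-valued) runtimes: $[\mathsf{emp}](s,h)=0$ if $h=h_\emptyset$, else $\infty$; $[\varphi\wedge\mathsf{emp}](s,h)=0$ if $s\models\varphi$ and $h=h_\emptyset$, else $\infty$; $\mathsf{tm}(e)(s,h)=s(e)$ if $h=h_\emptyset$, else $\infty$; $[e\mapsto e'](s,h)=0$ if $\mathrm{dom}(h)=\{s(e)\}$ and $h(s(e))=s(e')$, else $\infty$; $[e\mapsto -](s,h)=0$ if $\mathrm{dom}(h)=\{s(e)\}$, else $\infty$; $\bigoplus_{i=1}^{e} f_i$ is the separating sum over $i=1,\dots,s(e)$ (empty one: $[\mathsf{emp}]$). $\mathsf{ert}[\![C]\!]\colon\mathbb{T}\to\mathbb{T}$ (with $v$ fresh): $\mathsf{ert}[\![\mathtt{tick}(e)]\!](f)=\mathsf{tm}(e)\oplus f$; $\mathsf{ert}[\![x:=e]\!](f)=f[x/e]$; $\mathsf{ert}[\![x:=\mathtt{alloc}(e)]\!](f)=\sup v\colon (\bigoplus_{i=1}^{e}[v+i-1\mapsto 0])\mathbin{-\!\!\ominus} f[x/v]$; $\mathsf{ert}[\![\langle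 e\rangle:=e']\!](f)=[e\mapsto-]\oplus([e\mapsto e']\mathbin{-\!\!\ominus} f)$; $\mathsf{ert}[\![x:=\langle e\rangle]\!](f)=\inf v\colon [e\mapsto v]\oplus([e\mapsto v]\mathbin{-\!\!\ominus} f[x/v])$; $\mathsf{ert}[\![\mathtt{free}(e)]\!](f)=[e\mapsto-]\oplus f$; $\mathsf{ert}[\![C_1;C_2]\!](f)=\mathsf{ert}[\![C_1]\!](\mathsf{ert}[\![C_2]\!](f))$; conditional: $[\varphi]\cdot\mathsf{ert}[\![C_1]\!](f)+[\neg\varphi]\cdot\mathsf{ert}[\![C_2]\!](f)$; probabilistic choice: $p\cdot\mathsf{ert}[\![C_1]\!](f)+(1-p)\cdot\mathsf{ert}[\![C_2]\!](f)$; $\mathsf{ert}[\![\mathtt{while}(\varphi)\{C\}]\!](f)=\mathrm{lfp}\, g.\ [\neg\varphi]\cdot f+[\varphi]\cdot\mathsf{ert}[\![C]\!](g)$. Amortized runtimes. A potential function is $\pi\colon\mathsf{States}\to\mathbb{R}_{\ge0}$. $\mathbb{A}_\pi=\{X\colon\mathsf{States}\to\mathbb{R}\cup\{\infty\}\mid -\pi\le X\}$, ordered pointwise (complete lattice, least element $-\pi$). $\mathsf{aert}_\pi[\![C]\!]\colon\mathbb{A}_\pi\to\mathbb{A}_\pi$: $\mathsf{aert}_\pi[\![\mathtt{tick}(e)]\!](X)=e+X$; for atomic $C$ other than tick, $\mathsf{aert}_\pi[\![C]\!](X)=\mathsf{ert}[\![C]\!](X+\pi)-\pi$; sequencing by composition;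 conditional $[\varphi]\cdot\mathsf{aert}_\pi[\![C_1]\!](X)+[\neg\varphi]\cdot\mathsf{aert}_\pi[\![C_2]\!](X)$; probabilistic choice $p\cdot\mathsf{aert}_\pi[\![C_1]\!](X)+(1-p)\cdot\mathsf{aert}_\pi[\![C_2]\!](X)$; $\mathsf{aert}_\pi[\![\mathtt{while}(\varphi)\{C'\}]\!](X)=\mathrm{lfp}\,Y.\ [\neg\varphi]\cdot X+[\varphi]\cdot\mathsf{aert}_\pi[\![C']\!](Y)$ in $(\mathbb{A}_\pi,\preceq)$. *)

From HB Require Import structures.
From mathcomp Require Import all_boot all_order all_algebra.
From mathcomp Require Import all_classical all_reals ereal.
Set Implicit Arguments. Unset Strict Implicit. Unset Printing Implicit Defensive.
Import Order.TTheory GRing.Theory Num.Theory.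
Local Open Scope classical_set_scope.
Local Open Scope ring_scope.
Local Open Scope ereal_scope.

Section States.
Context (V : finType).

Definition stack := V -> nat.

Record heap := Heap {
  hval : nat -> option nat;
  hval0 : hval 0 = None;
  hfin : exists b, forall l, (b < l)%N -> hval l = None }.

Definition state := (stack * heap)%type.

Definition upd (s : stack) (x : V) (v : nat) : stack :=
  fun y => if y == x then v else s y.

Definition hsplit (h h1 h2 : heap) : Prop :=
  (forall l, hval h1 l = None \/ hval h2 l = None) /\
  (forall l, hval h l = match hval h1 l with Some w => Some w | None => hval h2 l end).

Definition hempty (h : heap) : Prop := forall l, hval h l = None.

Definition aexp := stack -> nat.
Definition bexp := stack -> bool.
Record pexp := PExp {
  pfun : stack -> rat;
  pfun_ge0 : forall s, (0 <= pfun s)%R;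
  pfun_le1 : forall s, (pfun s <= 1)%R }.

(* e[x/y]: substitute variable y for x in e *)
Definition asubst (e : aexp) (x y : V) : aexp := fun s => e (upd s x (s y)).

(* "x does not occur in e" (semantic rendering: e does not depend on x) *)
Definition a_indep (x : V) (e : aexp) : Prop := forall s v, e (upd s x v) = e s.
Definition b_indep (x : V) (b : bexp) : Prop := forall s v, b (upd s x v) = b s.
Definition p_indep (x : V) (p : pexp) : Prop := forall s v, pfun p (upd s x v) = pfun p s.

Inductive cmd :=
| Tick of aexp
| Assign of V & aexp
| Alloc of V & aexp
| Store of aexp & aexp
| Lookup of V & aexp
| Free of aexp
| PChoice of cmd & pexp & cmd
| Ite of bexp & cmd & cmd
| Seq of cmd & cmd
| While of bexp & cmd.

Fixpoint notin_cmd (y : V) (C : cmd) : Prop :=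
  match C with
  | Tick e => a_indep y e
  | Assign x e => x <> y /\ a_indep y e
  | Alloc x e => x <> y /\ a_indep y e
  | Store e e' => a_indep y e /\ a_indep y e'
  | Lookup x e => x <> y /\ a_indep y e
  | Free e => a_indep y e
  | PChoice C1 p C2 => notin_cmd y C1 /\ p_indep y p /\ notin_cmd y C2
  | Ite b C1 C2 => b_indep y b /\ notin_cmd y C1 /\ notin_cmd y C2
  | Seq C1 C2 => notin_cmd y C1 /\ notin_cmd y C2
  | While b C1 => b_indep y b /\ notin_cmd y C1
  end.

End States.

Section Runtimes.
Context {R : realType} {V : finType}.

Definition rt := state V -> \bar R.

Definition rle (f g : rt) : Prop := forall st, f st <= g st.

Definition iv (b : bool) : \bar R := if b then 1 else 0.

Definition tsub (a b : \bar R) : \bar R :=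
  if b == +oo then 0 else if a == +oo then +oo
  else if a - b < 0 then 0 else a - b.

Definition sepcon (f g : rt) : rt := fun st =>
  ereal_inf [set r | exists h1 h2, hsplit st.2 h1 h2 /\
                        r = f (st.1, h1) + g (st.1, h2)].

Definition septo (f g : rt) : rt := fun st =>
  ereal_sup [set r | exists h' h'', hsplit h'' st.2 h' /\
                        r = tsub (g (st.1, h'')) (f (st.1, h'))].

Definition inf_var (y : V) (f : rt) : rt := fun st =>
  ereal_inf [set f (upd st.1 y v, st.2) | v in [set: nat]].
Definition sup_var (y : V) (f : rt) : rt := fun st =>
  ereal_sup [set f (upd st.1 y v, st.2) | v in [set: nat]].

Definition subst_rt (f : rt) (x : V) (e : aexp V) : rt :=
  fun st => f (upd st.1 x (e st.1), st.2).

Definition atom (P : state V -> Prop) : rt := fun st => if `[< P st >] then 0 else +oo.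
Definition emp : rt := atom (fun st => hempty st.2).
Definition andemp (b : bexp V) : rt := atom (fun st => b st.1 /\ hempty st.2).
Definition tm (e : aexp V) : rt :=
  fun st => if `[< hempty st.2 >] then ((e st.1)%:R)%:E else +oo.
Definition pto (e e' : aexp V) : rt :=
  atom (fun st => forall l, hval st.2 l = if l == e st.1 then Some (e' st.1) else None).
Definition pto_any (e : aexp V) : rt :=
  atom (fun st => exists w, forall l, hval st.2 l = if l == e st.1 then Some w else None).

Fixpoint bigsep (k : nat) (F : nat -> rt) : rt :=
  match k with
  | 0 => emp
  | k'.+1 => sepcon (bigsep k' F) (F k'.+1)
  end.
Definition sepsum (n : aexp V) (F : nat -> rt) : rt := fun st => bigsep (n st.1) F st.

Definition lfpT (Phi : rt -> rt) : rt := fun st =>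
  ereal_inf [set Y st | Y in [set Y : rt | (forall st', 0 <= Y st') /\ rle (Phi Y) Y]].

Definition cst (v : nat) : aexp V := fun _ => v.

Fixpoint ert (C : cmd V) (f : rt) : rt :=
  match C with
  | Tick e => sepcon (tm e) f
  | Assign x e => subst_rt f x e
  | Alloc x e => fun st =>
      ereal_sup [set septo (sepsum e (fun i => pto (cst (v + i - 1)) (cst 0)))
                           (subst_rt f x (cst v)) st | v in [set: nat]]
  | Store e e' => sepcon (pto_any e) (septo (pto e e') f)
  | Lookup x e => fun st =>
      ereal_inf [set sepcon (pto e (cst v)) (septo (pto e (cst v)) (subst_rt f x (cst v))) st
                | v in [set: nat]]
  | Free e => sepcon (pto_any e) f
  | PChoice C1 p C2 => fun st =>
      (ratr (pfun p st.1))%:E * ert C1 f st + (1 - ratr (pfun p st.1))%:E * ert C2 f st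
  | Ite b C1 C2 => fun st =>
      iv (b st.1) * ert C1 f st + iv (~~ b st.1) * ert C2 f st
  | Seq C1 C2 => ert C1 (ert C2 f)
  | While b C1 => lfpT (fun g st => iv (~~ b st.1) * f st + iv (b st.1) * ert C1 g st)
  end.

Section Amortized.
Context (pi : state V -> R).

Definition minus_pi (f : rt) : rt := fun st => f st - (pi st)%:E.

Definition lfpA (Phi : rt -> rt) : rt := fun st =>
  ereal_inf [set Y st | Y in [set Y : rt |
     (forall st', - (pi st')%:E <= Y st') /\ rle (Phi Y) Y]].

Fixpoint aert (C : cmd V) (X : rt) : rt :=
  match C with
  | Tick e => fun st => ((e st.1)%:R)%:E + X st
  | PChoice C1 p C2 => fun st =>
      (ratr (pfun p st.1))%:E * aert C1 X st + (1 - ratr (pfun p st.1))%:E * aert C2 X st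
  | Ite b C1 C2 => fun st =>
      iv (b st.1) * aert C1 X st + iv (~~ b st.1) * aert C2 X st
  | Seq C1 C2 => aert C1 (aert C2 X)
  | While b C1 => lfpA (fun Y st => iv (~~ b st.1) * X st + iv (b st.1) * aert C1 Y st)
  | _ =>
      fun st => ert C (fun st' => X st' + (pi st')%:E) st - (pi st)%:E
  end.

End Amortized.
End Runtimes.

(** For an atomic statement other than [tick], [aert] is [ert] conjugated by
    the potential, so in (1)-(3) the potential cancels and what remains are
    the corresponding rules for [ert]: mutation and allocation hold with the
    empty frame, lookup by choosing the looked-up value [z].
    For (4), let [aertT C F := aert C (F - pi) + pi]. By induction on [C], if
    [y] does not occur in [C] then [aertT C (inf y: F) <= inf y: aertT C F]:
    atomic statements map [y]-independent runtimes to [y]-independent ones,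
    and for a loop whose least fixed point for [F] is [L], the function
    [(inf y: (L + pi)) - pi] is a prefixed point of the loop functional for
    [inf y: F]. Monotonicity of [inf y] then gives (4). *)
From HB Require Import structures.
From mathcomp Require Import all_boot all_order all_algebra.
From mathcomp Require Import all_classical all_reals ereal.
Import Order.TTheory GRing.Theory Num.Theory.
Local Open Scope classical_set_scope.
Local Open Scope ring_scope.
Local Open Scope ereal_scope.

Section States.
Context {V : finType}.

Lemma heap_ext (h1 h2 : heap) : hval h1 =1 hval h2 -> h1 = h2.
Proof.
case: h1 h2 => [v1 p1 q1] [v2 p2 q2] /= /funext E; subst.
by congr Heap; apply: Prop_irrelevance.
Qed.

Definition hemp : heap := @Heap (fun _ => None) erefl (ex_intro _ 0%N (fun _ _ => erefl)).

Lemma hsplit_hempr h : hsplit h h hemp.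
Proof. by split => l; [right | rewrite /=; case: (hval h l)]. Qed.

Lemma hsplit_hempl h : hsplit h hemp h.
Proof. by split => l; [left |]. Qed.

Lemma hsplit_hemptyl {h h1 h2} : hempty h1 -> hsplit h h1 h2 -> h = h2.
Proof. by move=> h1E [_ hE]; apply: heap_ext => l; rewrite hE h1E. Qed.

Lemma upd_same (s : stack V) x v : upd s x v x = v.
Proof. by rewrite /upd eqxx. Qed.

Lemma upd_other (s : stack V) x y v : y <> x -> upd s x v y = s y.
Proof. by rewrite /upd => /eqP/negbTE ->. Qed.

Lemma upd_upd (s : stack V) x v w : upd (upd s x v) x w = upd s x w.
Proof. by apply: funext => z; rewrite /upd; case: eqP. Qed.

Lemma updC {s : stack V} {x y v w} : x <> y ->
  upd (upd s x v) y w = upd (upd s y w) x v.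
Proof.
move=> xy; apply: funext => z; rewrite /upd.
by case: eqP => [zy|zy]; case: eqP => [zx|zx] //; case: xy; rewrite -zx -zy.
Qed.

Lemma upd_id (s : stack V) x : upd s x (s x) = s.
Proof. by apply: funext => z; rewrite /upd; case: eqP => [->|]. Qed.

End States.

Section TruncatedSubtraction.
Context {R : realType}.
Implicit Types a b : \bar R.

Lemma tsub_le0 a b : a <= b -> tsub a b <= 0.
Proof.
rewrite /tsub; case: eqP => // bNy; case: eqP => [-> | aNy].
  by rewrite leye_eq => /eqP.
case: ifP => // _; case: b bNy => [r| |] // _; case: a aNy => [a| |] // _.
- by rewrite -EFinB !lee_fin subr_le0.
- by move=> _; rewrite leNye.
- by move=> _; rewrite leNye.
Qed.

Lemma tsub_monol a a' b : a <= a' -> tsub a b <= tsub a' b.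
Proof.
move=> aa'; rewrite /tsub; case: eqP => // _; case: eqP => [aE|_].
  by move: aa'; rewrite aE leye_eq => /eqP ->; rewrite eqxx.
case: eqP => [_|_]; first exact: leey.
case: ifP => [_|abN]; first by case: ifP => // /negbT; rewrite -leNgt.
case: ifP => [a'bN|_]; last exact: leeD2r.
by move: abN; rewrite (le_lt_trans (leeD2r _ aa') a'bN).
Qed.

Lemma tsuby a : tsub a +oo = 0.
Proof. by rewrite /tsub eqxx. Qed.

End TruncatedSubtraction.

Section Separation.
Context {R : realType} {V : finType}.
Implicit Types F G : rt (R:=R) (V:=V).

Lemma atomT (P : state V -> Prop) st : P st -> atom (R:=R) P st = 0.
Proof. by move=> Pst; rewrite /atom asboolT. Qed.

Lemma sepcon_le {F G s h h1 h2} : hsplit h h1 h2 ->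
  sepcon F G (s, h) <= F (s, h1) + G (s, h2).
Proof. by move=> hs; apply: ereal_inf_lbound; exists h1, h2. Qed.

Lemma sepcon_mono F1 F2 G1 G2 : rle F1 F2 -> rle G1 G2 ->
  rle (sepcon F1 G1) (sepcon F2 G2).
Proof.
move=> F12 G12 [s h]; apply: le_ereal_inf_tmp => _ [h1 [h2 [hs ->]]].
exact: le_trans (sepcon_le hs) (leeD (F12 _) (G12 _)).
Qed.

Lemma sepcon_congr F1 F2 G1 G2 s1 s2 :
  (forall h, F1 (s1, h) = F2 (s2, h)) -> (forall h, G1 (s1, h) = G2 (s2, h)) ->
  forall h, sepcon F1 G1 (s1, h) = sepcon F2 G2 (s2, h).
Proof.
move=> FE GE h; rewrite /sepcon /=; congr ereal_inf; apply/funext => r.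
by apply/propext; split => -[h1 [h2 [hs ->]]]; exists h1, h2; rewrite FE GE.
Qed.

Lemma septo_mono F G1 G2 : rle G1 G2 -> rle (septo F G1) (septo F G2).
Proof.
move=> G12 [s h]; apply: ge_ereal_sup => _ [h' [h'' [hs ->]]].
apply: le_ereal_sup_tmp; exists (tsub (G2 (s, h'')) (F (s, h'))).
  by exists h', h''.
exact: tsub_monol.
Qed.

Lemma septo_congr F1 F2 G1 G2 s1 s2 :
  (forall h, F1 (s1, h) = F2 (s2, h)) -> (forall h, G1 (s1, h) = G2 (s2, h)) ->
  forall h, septo F1 G1 (s1, h) = septo F2 G2 (s2, h).
Proof.
move=> FE GE h; rewrite /septo /=; congr ereal_sup; apply/funext => r.
by apply/propext; split => -[h1 [h2 [hs ->]]]; exists h1, h2; rewrite FE GE.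
Qed.

Lemma septo_hempty_le0 F G s h : hempty h ->
  (forall h', tsub (G (s, h')) (F (s, h')) <= 0) -> septo F G (s, h) <= 0.
Proof.
move=> h0 FG; apply: ge_ereal_sup => _ [h' [h'' [hs ->]]].
by rewrite (hsplit_hemptyl h0 hs).
Qed.

Lemma pto_congr (e1 e1' e2 e2' : aexp V) s1 s2 :
  e1 s1 = e2 s2 -> e1' s1 = e2' s2 ->
  forall h, pto (R:=R) e1 e1' (s1, h) = pto e2 e2' (s2, h).
Proof. by move=> E E' h; rewrite /pto /atom /= E E'. Qed.

Lemma pto_any_congr (e : aexp V) s1 s2 : e s1 = e s2 ->
  forall h, pto_any (R:=R) e (s1, h) = pto_any e (s2, h).
Proof. by move=> E h; rewrite /pto_any /atom /= E. Qed.

Lemma bigsep_congr n (F1 F2 : nat -> rt (R:=R) (V:=V)) s1 s2 :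
  (forall i h, F1 i (s1, h) = F2 i (s2, h)) ->
  forall h, bigsep n F1 (s1, h) = bigsep n F2 (s2, h).
Proof. by move=> FE; elim: n => [|n IH] h //=; apply: sepcon_congr. Qed.

Lemma ert_store_le (e e' : aexp V) :
  rle (ert (Store e e') (pto e e')) (pto_any (R:=R) e).
Proof.
move=> [s h]; apply: le_trans (sepcon_le (hsplit_hempr h)) _.
rewrite -[leRHS]adde0 leeD2l //.
by apply: septo_hempty_le0 => // h'; apply: tsub_le0.
Qed.

Lemma ert_alloc_le (x : V) (e : aexp V) : a_indep x e ->
  rle (ert (Alloc x e) (sepsum e (fun i => pto (fun s => (s x + i - 1)%N) (fun _ => 0%N))))
      (@emp R V).
Proof.
move=> xe [s h]; rewrite /emp /atom; case: asboolP => [h0|_]; last exact: leey.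
apply: ge_ereal_sup => _ [v _ <-]; apply: septo_hempty_le0 => // h'.
apply: tsub_le0; rewrite /subst_rt /sepsum /= xe.
erewrite bigsep_congr; first exact: lexx.
by move=> i h''; apply: pto_congr => /=; rewrite ?upd_same.
Qed.

Lemma ert_lookup_le (x y z : V) (e : aexp V) : x <> y ->
  rle (ert (Lookup x e)
         (sepcon (andemp (fun s => s x == s z)) (pto (asubst e x y) (fun s => s z))))
      (sepcon (andemp (fun s => s x == s y)) (pto (R:=R) e (fun s => s z))).
Proof.
move=> xy [s h]; set Q := sepcon _ (pto (asubst e x y) _).
apply: le_ereal_inf_tmp => _ [h1 [h2 [hs ->]]]; rewrite /andemp /pto /atom /=.
case: asboolP => [[/eqP xyE h10] | _]; last by case: asboolP; rewrite ?adde0 leey.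
case: asboolP => [h2E | _]; last by rewrite add0e leey.
rewrite adde0; apply: le_trans (ereal_inf_lbound (imageP _ (I : [set: nat] (s z)))) _.
apply: le_trans (sepcon_le (hsplit_hempr h)) _; rewrite -[leRHS]adde0; apply: leeD.
  by rewrite /pto atomT // => l /=; rewrite hs.2 h10 h2E.
apply: septo_hempty_le0 => // h'; rewrite /pto /atom.
case: asboolP => [/= h'E|_]; last by rewrite tsuby.
have zE : upd s x (s z) z = s z by rewrite /upd; case: (_ == _).
have empE : andemp (R:=R) (fun s => s x == s z) (upd s x (s z), hemp) = 0.
  by rewrite /andemp atomT //= upd_same zE.
have ptoE : pto (R:=R) (asubst e x y) (fun s => s z) (upd s x (s z), h') = 0.
  rewrite /pto atomT // => l /=; rewrite h'E /asubst upd_upd zE upd_other.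
    by rewrite -xyE upd_id.
  exact: nesym.
apply/tsub_le0/le_trans; first exact: (sepcon_le (hsplit_hempl h')).
by rewrite /= empE ptoE adde0.
Qed.

Definition rt_indep (y : V) F := forall s v h, F (upd s y v, h) = F (s, h).

Lemma inf_var_indep y F : rt_indep y (inf_var y F).
Proof.
move=> s v h; rewrite /inf_var /=; congr ereal_inf; congr image.
by apply: funext => w; rewrite upd_upd.
Qed.

Lemma le_inf_var y (a : \bar R) F s h :
  (forall v, a <= F (upd s y v, h)) -> a <= inf_var y F (s, h).
Proof. by move=> aF; apply: le_ereal_inf_tmp => _ [v _ <-]. Qed.

Lemma inf_var_le_upd y F s v h : inf_var y F (s, h) <= F (upd s y v, h).
Proof. by apply: ereal_inf_lbound; exists v. Qed.

Lemma inf_var_le y F : rle (inf_var y F) F.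
Proof. by move=> [s h]; rewrite -{2}(upd_id s y); apply: inf_var_le_upd. Qed.

Lemma lee_inf_var y F G s h :
  (forall v, F (upd s y v, h) <= G (upd s y v, h)) ->
  inf_var y F (s, h) <= inf_var y G (s, h).
Proof.
by move=> FG; apply: le_inf_var => v; exact: le_trans (inf_var_le_upd y F s v h) (FG v).
Qed.

Definition atomic (C : cmd V) : Prop :=
  match C with
  | Tick _ | PChoice _ _ _ | Ite _ _ _ | Seq _ _ | While _ _ => False
  | _ => True
  end.

Lemma ert_mono {C F G} : atomic C -> rle F G -> rle (ert C F) (ert C G).
Proof.
case: C => //= [x e|x e|e e'|x e|e] _ FG.
- by move=> [s h]; apply: FG.
- move=> st; apply: ge_ereal_sup => _ [v _ <-].
  apply: le_ereal_sup_tmp; eexists; first by exists v.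
  by apply: septo_mono => st'; apply: FG.
- by apply: sepcon_mono => //; apply: septo_mono.
- move=> st; apply: le_ereal_inf_tmp => _ [v _ <-].
  apply: ge_ereal_inf; eexists; first by exists v.
  by apply: sepcon_mono => //; apply: septo_mono => st'; apply: FG.
- exact: sepcon_mono.
Qed.

Lemma ert_indep {C y F} : atomic C -> notin_cmd y C -> rt_indep y F -> rt_indep y (ert C F).
Proof.
case: C => //= [x e|x e|e e'|x e|e] _.
- by move=> [xy ye] yF s v h; rewrite /subst_rt /= ye (updC (nesym xy)); apply: yF.
- move=> [xy ye] yF s v h; congr ereal_sup; congr image; apply: funext => w.
  apply: septo_congr => h'.
    by rewrite /sepsum /= ye; apply: bigsep_congr.
  by rewrite /subst_rt /= (updC (nesym xy)); apply: yF.
- move=> [ye ye'] yF s v h; apply: sepcon_congr => h'; first exact: pto_any_congr.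
  by apply: septo_congr => h''; [apply: pto_congr | apply: yF].
- move=> [xy ye] yF s v h; congr ereal_inf; congr image; apply: funext => w.
  apply: sepcon_congr => h'; first exact: pto_congr.
  apply: septo_congr => h''; first exact: pto_congr.
  by rewrite /subst_rt /= (updC (nesym xy)); apply: yF.
- by move=> ye yF s v h; apply: sepcon_congr => h'; [apply: pto_any_congr | apply: yF].
Qed.

Lemma ert_inf_var_le C y F : atomic C -> notin_cmd y C ->
  rle (ert C (inf_var y F)) (inf_var y (ert C F)).
Proof.
move=> aC yC [s h]; apply: le_inf_var => v.
rewrite -(ert_indep aC yC (inf_var_indep y F) s v h).
exact: ert_mono aC (inf_var_le y F) _.
Qed.

End Separation.

Section Amortized.
Context {R : realType} {V : finType} (pi : state V -> R).
Implicit Types F G X Y : rt (R:=R) (V:=V).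

Lemma ratr_pfun_ge0 (p : pexp V) s : (0 <= ratr (pfun p s) :> R)%R.
Proof. by rewrite ler0q pfun_ge0. Qed.

Lemma ratr_pfun_le1 (p : pexp V) s : (ratr (pfun p s) <= 1 :> R)%R.
Proof. by rewrite -(rmorph1 (ratr : {rmorphism rat -> R})) ler_rat pfun_le1. Qed.

Lemma iv_ge0 b : 0 <= iv (R:=R) b.
Proof. by case: b. Qed.

Lemma aert_atomicE C X : atomic C ->
  aert pi C X = fun st => ert C (fun st' => X st' + (pi st')%:E) st - (pi st)%:E.
Proof. by case: C. Qed.

Lemma aert_mono C X Y : rle X Y -> rle (aert pi C X) (aert pi C Y).
Proof.
elim: C X Y => [e|x e|x e|e e'|x e|e|C1 IH1 p C2 IH2|b C1 IH1 C2 IH2|C1 IH1 C2 IH2|b C1 IH1]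
  X Y XY st; try by rewrite !aert_atomicE //;
    apply: leeD2r; apply: ert_mono => // st'; apply: leeD2r.
- exact: leeD2l.
- have [c0 c1] := (ratr_pfun_ge0 p st.1, ratr_pfun_le1 p st.1).
  apply: leeD; apply: lee_wpmul2l; rewrite ?lee_fin ?subr_ge0 //.
    exact: IH1.
  exact: IH2.
- by apply: leeD; apply: lee_wpmul2l; rewrite ?iv_ge0 //; [apply: IH1 | apply: IH2].
- by apply: IH1; apply: IH2.
- apply: ereal_inf_le_tmp => _ [Z [Zge ZP] <-]; exists Z => //; split => // st'.
  by apply: le_trans (ZP st'); apply: leeD2r; apply: lee_wpmul2l; rewrite ?iv_ge0.
Qed.

Lemma lfpA_ge Phi st : - (pi st)%:E <= lfpA pi Phi st.
Proof. by apply: le_ereal_inf_tmp => _ [Y [Yge _] <-]. Qed.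

Lemma lfpA_le {Phi Y} :
  (forall st, - (pi st)%:E <= Y st) -> rle (Phi Y) Y -> rle (lfpA pi Phi) Y.
Proof. by move=> Yge YP st; apply: ereal_inf_lbound; exists Y. Qed.

Lemma lfpA_prefixed {Phi} : (forall X Y, rle X Y -> rle (Phi X) (Phi Y)) ->
  rle (Phi (lfpA pi Phi)) (lfpA pi Phi).
Proof.
move=> Phi_mono st; apply: le_ereal_inf_tmp => _ [Y [Yge YP] <-].
exact: le_trans (Phi_mono _ _ (lfpA_le Yge YP) st) (YP st).
Qed.

Definition aertT C F : rt := fun st => aert pi C (minus_pi pi F) st + (pi st)%:E.

Lemma minus_piK F : (fun st => minus_pi pi F st + (pi st)%:E) = F.
Proof. by apply: funext => st; rewrite /minus_pi subeK. Qed.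

Lemma add_piK X : minus_pi pi (fun st => X st + (pi st)%:E) = X.
Proof. by apply: funext => st; rewrite /minus_pi addeK. Qed.

Lemma aert_minus_piE C F : aert pi C (minus_pi pi F) = minus_pi pi (aertT C F).
Proof. by rewrite add_piK. Qed.

Lemma aertT_mono C {F G} : rle F G -> rle (aertT C F) (aertT C G).
Proof. by move=> FG st; apply: leeD2r; apply: aert_mono => st'; apply: leeD2r. Qed.

Lemma aertT_atomic C F : atomic C -> aertT C F = ert C F.
Proof.
by move=> aC; apply: funext => st; rewrite /aertT aert_atomicE // minus_piK subeK.
Qed.

Lemma aertT_tick e F st : aertT (Tick e) F st = ((e st.1)%:R)%:E + F st.
Proof. by rewrite /aertT /= /minus_pi -addeA subeK. Qed.

Lemma convexeD (c p : R) (a b : \bar R) :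
  c%:E * (a + p%:E) + (1 - c)%:E * (b + p%:E) = c%:E * a + (1 - c)%:E * b + p%:E.
Proof.
rewrite !muleDr ?fin_num_adde_defl // addeACA -!EFinM -EFinD.
by rewrite -mulrDl (addrC c) subrK mul1r.
Qed.

Lemma aertT_pchoice C1 p C2 F st : aertT (PChoice C1 p C2) F st =
  (ratr (pfun p st.1))%:E * aertT C1 F st + (1 - ratr (pfun p st.1))%:E * aertT C2 F st.
Proof. by rewrite /aertT /= convexeD. Qed.

Lemma aertT_ite b C1 C2 F st :
  aertT (Ite b C1 C2) F st = if b st.1 then aertT C1 F st else aertT C2 F st.
Proof. by rewrite /aertT /=; case: (b st.1); rewrite /iv /= mul1e mul0e ?adde0 ?add0e. Qed.

Lemma aertT_seq C1 C2 F : aertT (Seq C1 C2) F = aertT C1 (aertT C2 F).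
Proof. by apply: funext => st; rewrite /aertT /= add_piK. Qed.

Lemma aertT_while_inf_var_le b C y F : b_indep y b ->
  (forall G, rle (aertT C (inf_var y G)) (inf_var y (aertT C G))) ->
  rle (aertT (While b C) (inf_var y F)) (inf_var y (aertT (While b C) F)).
Proof.
move=> yb IH.
pose Phi G Z st := iv (~~ b st.1) * minus_pi pi G st + iv (b st.1) * aert pi C Z st.
have Phi_mono G Z Z' : rle Z Z' -> rle (Phi G Z) (Phi G Z').
  by move=> ZZ' st; apply: leeD2l; apply: lee_wpmul2l; [exact: iv_ge0 | exact: aert_mono].
pose L := lfpA pi (Phi F); pose LT st := L st + (pi st)%:E.
have L_fix : rle (Phi F L) L := lfpA_prefixed (Phi_mono F).
suff Linf_le : rle (lfpA pi (Phi (inf_var y F))) (minus_pi pi (inf_var y LT)).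
  by move=> st; have := leeD2r (pi st)%:E (Linf_le st); rewrite /minus_pi subeK.
apply: lfpA_le => [st | [s h]].
  rewrite /minus_pi -[X in X <= _]add0e leeD2rE //; apply: le_inf_var => v.
  by rewrite /LT -leeBlDr // sub0e lfpA_ge.
have := L_fix; case Eb: (b s); rewrite /Phi /= Eb /iv mul0e mul1e ?add0e ?adde0.
- move=> L_fixC; rewrite aert_minus_piE /minus_pi leeD2rE //.
  apply: le_trans (IH LT (s, h)) _; apply: lee_inf_var => v.
  have := L_fixC (upd s y v, h); rewrite /= yb Eb /iv mul0e mul1e add0e.
  by rewrite /aertT add_piK => /leeD2r; apply.
- move=> L_fixF; rewrite /minus_pi leeD2rE //; apply: lee_inf_var => v.
  have := L_fixF (upd s y v, h); rewrite /= yb Eb /iv mul1e mul0e adde0.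
  by rewrite /minus_pi leeBlDr.
Qed.

Lemma aertT_inf_var_le C y F : notin_cmd y C ->
  rle (aertT C (inf_var y F)) (inf_var y (aertT C F)).
Proof.
elim: C F => [e|x e|x e|e e'|x e|e|C1 IH1 p C2 IH2|b C1 IH1 C2 IH2|C1 IH1 C2 IH2|b C1 IH1]
  F yC; try by rewrite !aertT_atomic //; apply: ert_inf_var_le.
- move=> [s h]; rewrite aertT_tick; apply: le_inf_var => v.
  by rewrite aertT_tick /= yC; apply: leeD2l; apply: inf_var_le_upd.
- case: yC => y1 [yp y2] [s h]; rewrite aertT_pchoice /=.
  have [c0 c1] := (ratr_pfun_ge0 p s, ratr_pfun_le1 p s).
  have c'0 : (0 <= 1 - ratr (pfun p s) :> R)%R by rewrite subr_ge0.
  apply: le_trans (leeD (lee_wpmul2l _ (IH1 F y1 (s, h)))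
                        (lee_wpmul2l _ (IH2 F y2 (s, h)))) _; rewrite ?lee_fin //.
  apply: le_inf_var => v; rewrite aertT_pchoice /= yp.
  by apply: leeD; apply: lee_wpmul2l; rewrite ?lee_fin // inf_var_le_upd.
- case: yC => yb [y1 y2] [s h]; rewrite aertT_ite /=.
  case Eb: (b s).
    apply: le_trans (IH1 F y1 (s, h)) _.
    by apply: lee_inf_var => v; rewrite aertT_ite /= yb Eb.
  apply: le_trans (IH2 F y2 (s, h)) _.
  by apply: lee_inf_var => v; rewrite aertT_ite /= yb Eb.
- case: yC => y1 y2 st; rewrite !aertT_seq.
  exact: le_trans (aertT_mono C1 (IH2 F y2) st) (IH1 _ y1 st).
- by case: yC => yb y1; apply: aertT_while_inf_var_le => // G; apply: IH1.
Qed.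

Lemma aert_atomic_minus_pi_le C F G : atomic C -> rle (ert C F) G ->
  rle (aert pi C (minus_pi pi F)) (minus_pi pi G).
Proof. by move=> aC FG st; rewrite aert_minus_piE aertT_atomic //; apply: leeD2r. Qed.

Lemma aert_inf_var_le C y F G : notin_cmd y C ->
  rle (aert pi C (minus_pi pi F)) (minus_pi pi G) ->
  rle (aert pi C (fun st => - (pi st)%:E + inf_var y F st))
      (fun st => - (pi st)%:E + inf_var y G st).
Proof.
move=> yC; rewrite aert_minus_piE => FG.
have -> : (fun st => - (pi st)%:E + inf_var y F st) = minus_pi pi (inf_var y F).
  by apply: funext => st; rewrite addeC.
move=> [s h]; rewrite aert_minus_piE [- _ + _]addeC; apply: leeD2r.
apply: le_trans (aertT_inf_var_le C y F yC (s, h)) _; apply: lee_inf_var => v.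
by have := FG (upd s y v, h); rewrite /minus_pi leeD2rE.
Qed.

End Amortized.

Theorem mainTheorem11 (R : realType) (V : finType) (pi : state V -> R)
  (pi_ge0 : forall st, (0 <= pi st)%R) :
  (* (1) mut *)
  (forall e e' : aexp V,
     rle (aert pi (Store e e') (minus_pi pi (pto e e')))
         (minus_pi pi (pto_any e))) /\
  (* (2) lkp *)
  (forall (x y z : V) (e : aexp V), x <> y ->
     rle (aert pi (Lookup x e)
            (minus_pi pi (sepcon (andemp (fun s => s x == s z))
                                 (pto (asubst e x y) (fun s => s z)))))
         (minus_pi pi (sepcon (andemp (fun s => s x == s y))
                              (pto e (fun s => s z))))) /\
  (* (3) alc *)
  (forall (x : V) (e : aexp V), a_indep x e ->
     rle (aert pi (Alloc x e)
            (minus_pi pi (sepsum e (fun i => pto (fun s => (s x + i - 1)%N) (fun _ => 0%N)))))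
         (minus_pi pi (@emp R V))) /\
  (* (4) aux *)
  (forall (C : cmd V) (f g : state V -> \bar R) (y : V),
     (forall st, 0 <= f st) -> (forall st, 0 <= g st) ->
     notin_cmd y C ->
     rle (aert pi C (minus_pi pi f)) (minus_pi pi g) ->
     rle (aert pi C (fun st => - (pi st)%:E + inf_var y f st))
         (fun st => - (pi st)%:E + inf_var y g st)).
Proof.
split; [|split; [|split]].
- by move=> e e'; apply: aert_atomic_minus_pi_le => //; apply: ert_store_le.
- by move=> x y z e xy; apply: aert_atomic_minus_pi_le => //; apply: ert_lookup_le.
- by move=> x e xe; apply: aert_atomic_minus_pi_le => //; apply: ert_alloc_le.
- by move=> C f g y _ _; apply: aert_inf_var_le.
Qed.
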